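(* Let $k\ge0$ be an integer and $\alpha>\beta>0$, and let $x_0$ be the unique zero of $D$ in $[\delta_{-1},\delta_1]$. Then $$ x_0\in\Big(-qs-\tfrac23\sqrt{(1-q^2)(1-s^2)},\,-qs\Big)\subset(\delta_{-1},\delta_1). $$
   Context: Put $r=2k+\alpha+\beta+1$, $q=(\alpha-\beta)/r$, $s=(\alpha+\beta)/r$, $\delta_{\pm1}=\mp qs\pm\sqrt{(1-q^2)(1-s^2)}$, $d(x)=1-q^2-s^2-2qsx-x^2$, $$A(x)=-\frac{x^3+3qsx^2+(2q^2+2s^2-1)x+qs}{2(1-x^2)d(x)},\qquad B(x)=\frac{d(x)r^2}{4(1-x^2)^2}+\frac{E(x)}{4(1-x^2)d(x)^2},$$ $E(x)=2qsx^3-(1-4q^2-4s^2+q^2s^2)x^2+6qsx+1-q^4-s^4+3q^2s^2$, and $D(x)=2(1-x^2)^2d(x)^3\big(4A(x)B(x)-B'(x)\big)$, which is a polynomial in $x$ having exactly one zero in $[\delta_{-1},\delta_1]$. *)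

From Stdlib Require Import Reals Lra.
From Coquelicot Require Import Coquelicot.
Open Scope R_scope.

Section Jacobi.
Variables (k : nat) (alpha beta : R).

Definition r_ : R := 2 * INR k + alpha + beta + 1.
Definition q_ : R := (alpha - beta) / r_.
Definition s_ : R := (alpha + beta) / r_.

(* delta_{+1} and delta_{-1}: the two roots -qs +- sqrt((1-q^2)(1-s^2)) of d *)
Definition sq_ : R := sqrt ((1 - q_^2) * (1 - s_^2)).
Definition delta_p : R := - (q_ * s_) + sq_.
Definition delta_m : R := - (q_ * s_) - sq_.

Definition d_ (x : R) : R := 1 - q_^2 - s_^2 - 2 * q_ * s_ * x - x^2.

Definition A_ (x : R) : R :=
  - (x^3 + 3 * q_ * s_ * x^2 + (2 * q_^2 + 2 * s_^2 - 1) * x + q_ * s_)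
  / (2 * (1 - x^2) * d_ x).

Definition E_ (x : R) : R :=
  2 * q_ * s_ * x^3 - (1 - 4 * q_^2 - 4 * s_^2 + q_^2 * s_^2) * x^2
  + 6 * q_ * s_ * x + 1 - q_^4 - s_^4 + 3 * q_^2 * s_^2.

Definition B_ (x : R) : R :=
  d_ x * r_^2 / (4 * (1 - x^2)^2) + E_ x / (4 * (1 - x^2) * d_ x^2).

(* the defining formula of D, valid off the singular points x = +-1, d(x)=0 *)
Definition D_formula (x : R) : R :=
  2 * (1 - x^2)^2 * (d_ x)^3 * (4 * A_ x * B_ x - Derive B_ x).

(* D as the polynomial it is: the (continuous) extension of the formula,
   D(x) := lim_{y -> x} D_formula(y). *)
Definition D_ (x : R) : R := Lim D_formula (Finite x).

End Jacobi.

(** Off its singular points [D] coincides with the polynomial [Dpoly q s], so it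
    suffices to exhibit a sign change of [Dpoly q s] on [(-qs - 2S/3, -qs)], where
    [S] is the square root in [delta_(+-1)].  At [-qs] the value factors as
    [qs (1-q^2)^2 (1-s^2)^2 (-5 - q^2 - s^2 + 7q^2s^2) < 0].  At [-qs - 2S/3] it
    equals [S^3 (a + qsS b/3)/243] with [a, b] polynomials in [u = 1-q^2] and
    [v = 1-s^2]; it is positive because [a > 0] and [9a^2 > (qsSb)^2], and the
    latter two-variable inequality becomes a quadratic problem in [l] after the
    substitution [l = uv/(u+v)^2], [m = uv/(u+v)].  The intermediate value
    theorem gives a zero strictly between, which is [x0] by uniqueness. *)
From Stdlib Require Import Reals Lra.
From Coquelicot Require Import Coquelicot.
Open Scope R_scope.

(* [2 u^2 d^3 (4 A B - B')] with [u = 1 - x^2], [A = -N/(2ud)] and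
   [B = d r^2/(4u^2) + E/(4ud^2)]; the [r^2] parts cancel as [2N + d'u - 2du' = 0]. *)
Definition Dpoly (q s x : R) : R :=
  let u := 1 - x^2 in
  let u' := -2*x in
  let d := 1 - q^2 - s^2 - 2*q*s*x - x^2 in
  let d' := -2*q*s - 2*x in
  let N := x^3 + 3*q*s*x^2 + (2*q^2 + 2*s^2 - 1)*x + q*s in
  let c := 1 - 4*q^2 - 4*s^2 + q^2*s^2 in
  let E := 2*q*s*x^3 - c*x^2 + 6*q*s*x + 1 - q^4 - s^4 + 3*q^2*s^2 in
  let E' := 6*q*s*x^2 - 2*c*x + 6*q*s in
  - N*E - (E'*u*d - E*u'*d - 2*E*u*d')/2.

Lemma Dpoly_continuous (q s : R) : continuity (Dpoly q s).
Proof. unfold Dpoly. reg. Qed.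

Lemma Dpoly_center_neg (q s : R) :
  0 < q < 1 -> 0 < s < 1 -> Dpoly q s (-(q*s)) < 0.
Proof.
intros hq hs.
replace (Dpoly q s (-(q*s)))
  with (q*s * (1-q^2)^2 * (1-s^2)^2 * (-5 - q^2 - s^2 + 7*q^2*s^2))
  by (unfold Dpoly; cbv zeta; field).
apply Rmult_pos_neg.
- apply Rmult_lt_0_compat; [apply Rmult_lt_0_compat; [nra|]|]; apply pow_lt; nra.
- assert (0 < q^2 < 1) by nra. assert (0 < s^2 < 1) by nra. nra.
Qed.

Definition Dleft0 (u v : R) : R :=
  1890*(u^2 + v^2) + 9380*u*v - 12230*u*v*(u + v) + 11350*u^2*v^2.

Definition Dleft1 (u v : R) : R := -19710*(u + v) + 34075*u*v.

(* The quotient of [243 Dpoly q s (-qs - 2S/3) - S^3 (Dleft0 u v + qsS Dleft1 u v/3)]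
   by [S^2 - uv], where [u = 1 - q^2], [v = 1 - s^2]. *)
Definition Dleft_quotient (q s S : R) : R :=
  (-2/3)*S + (32/243)*S^3 + (-14/3)*s^2*S + (-128/243)*s^2*S^3 + (-2/3)*s^4*S
  + 5*q*s + (97/9)*q*s*S^2 + (64/729)*q*s*S^4 + (-4)*q*s^3 + (125/9)*q*s^3*S^2
  + (-1)*q*s^5 + (-14/3)*q^2*S + (-128/243)*q^2*S^3 + (-4/3)*q^2*s^2*S
  + (352/243)*q^2*s^2*S^3 + 18*q^2*s^4*S + (-4)*q^3*s + (125/9)*q^3*s*S^2
  + (-4)*q^3*s^3 + (-347/9)*q^3*s^3*S^2 + 8*q^3*s^5 + (-2/3)*q^4*S
  + 18*q^4*s^2*S + (-70/3)*q^4*s^4*S + (-1)*q^5*s + 8*q^5*s^3 + (-7)*q^5*s^5.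

Lemma Dpoly_left_eq (q s S : R) : S * S = (1 - q^2) * (1 - s^2) ->
  243 * Dpoly q s (-(q*s) - 2/3*S) =
  S^3 * (Dleft0 (1 - q^2) (1 - s^2) + q*s*S * Dleft1 (1 - q^2) (1 - s^2) / 3).
Proof.
intros hS.
transitivity (S^3 * (Dleft0 (1 - q^2) (1 - s^2) + q*s*S * Dleft1 (1 - q^2) (1 - s^2) / 3)
              + 243 * (S*S - (1 - q^2) * (1 - s^2)) * Dleft_quotient q s S).
- unfold Dpoly, Dleft0, Dleft1, Dleft_quotient. field.
- rewrite hS. ring.
Qed.

Lemma Dleft0_pos (u v : R) : 0 < u < 1 -> 0 < v < 1 -> 0 < Dleft0 u v.
Proof.
intros hu hv. unfold Dleft0.
assert (huv : 0 < u*v) by nra.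
assert (h : 0 < 13160 - 12230*(u + v) + 11350*(u*v)) by nra.
pose proof (pow2_ge_0 (u - v)). pose proof (Rmult_lt_0_compat _ _ huv h). nra.
Qed.

Lemma Dleft_reduced_pos (l m : R) : l <= 1/4 -> 0 <= m <= 1/2 ->
  0 < 9*(1890 + 5600*l - 12230*m + 11350*m^2)^2 - (l - m + m^2)*(19710 - 34075*m)^2.
Proof.
intros hl hm.
set (X := 1890 - 12230*m + 11350*m^2).
set (G := 19710 - 34075*m).
(* a quadratic in [l], expanded around [l = 1/4] *)
replace (9*(1890 + 5600*l - 12230*m + 11350*m^2)^2 - (l - m + m^2)*G^2)
  with ((1/4 - l) * -(282240000*(l + 1/4) + (100800*X - G^2))
        + (15 + 115/2*m - 25*m^2) * (19725 - 146875/2*m + 68125*m^2))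
  by (unfold X, G; field).
assert (hslope : 282240000*(l + 1/4) + (100800*X - G^2) <= 0).
{ replace (100800*X - G^2) with (-197972100 + 110452500*m - 17025625*m^2)
    by (unfold X, G; field).
  nra. }
assert (h1 : 0 < 15 + 115/2*m - 25*m^2) by nra.
assert (h2 : 0 < 19725 - 146875/2*m + 68125*m^2) by nra.
assert (0 <= (1/4 - l) * -(282240000*(l + 1/4) + (100800*X - G^2))) by nra.
assert (0 < (15 + 115/2*m - 25*m^2) * (19725 - 146875/2*m + 68125*m^2)) by nra.
lra.
Qed.

Lemma Dleft_discriminant_pos (u v : R) : 0 < u < 1 -> 0 < v < 1 ->
  u*v*(1 - u)*(1 - v) * Dleft1 u v ^ 2 < 9 * Dleft0 u v ^ 2.
Proof.
intros hu hv. apply Rlt_0_minus.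
assert (hsum : 0 < u + v) by lra.
set (l := u*v/(u + v)^2). set (m := u*v/(u + v)).
replace (9 * Dleft0 u v ^ 2 - u*v*(1 - u)*(1 - v) * Dleft1 u v ^ 2)
  with ((u + v)^4 * (9*(1890 + 5600*l - 12230*m + 11350*m^2)^2
                     - (l - m + m^2)*(19710 - 34075*m)^2))
  by (unfold l, m, Dleft0, Dleft1; field; lra).
apply Rmult_lt_0_compat; [apply pow_lt; lra|].
apply Dleft_reduced_pos.
- unfold l. apply Rle_div_l; [apply pow_lt; lra|].
  pose proof (pow2_ge_0 (u - v)). nra.
- unfold m. split.
  + apply Rdiv_le_0_compat; nra.
  + apply Rle_div_l; nra.
Qed.

Lemma Dpoly_left_pos (q s S : R) : 0 < q < 1 -> 0 < s < 1 -> 0 < S ->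
  S * S = (1 - q^2) * (1 - s^2) -> 0 < Dpoly q s (-(q*s) - 2/3*S).
Proof.
intros hq hs hS hSS.
assert (hu : 0 < 1 - q^2 < 1) by nra. assert (hv : 0 < 1 - s^2 < 1) by nra.
pose proof (Dleft0_pos _ _ hu hv) as ha.
pose proof (Dleft_discriminant_pos _ _ hu hv) as hdisc.
apply (Rmult_lt_reg_l 243); [lra|]. rewrite Rmult_0_r, (Dpoly_left_eq _ _ _ hSS).
apply Rmult_lt_0_compat; [apply pow_lt; lra|].
set (a := Dleft0 (1 - q^2) (1 - s^2)) in *.
set (b := q*s*S * Dleft1 (1 - q^2) (1 - s^2)).
assert (hb : b^2 < 9*a^2).
{ replace (b^2) with (S*S * (q^2*s^2) * Dleft1 (1 - q^2) (1 - s^2) ^ 2) by (unfold b; ring).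
  rewrite hSS.
  replace ((1 - q^2) * (1 - s^2) * (q^2*s^2)) with
    ((1 - q^2) * (1 - s^2) * (1 - (1 - q^2)) * (1 - (1 - s^2))) by ring.
  exact hdisc. }
nra.
Qed.

Lemma locally'_neq (x c : R) : locally' x (fun y => y <> c).
Proof.
destruct (Req_dec x c) as [->|hxc].
- exists (mkposreal 1 Rlt_0_1). intros y _ hy. exact hy.
- assert (hd : 0 < Rabs (x - c)) by (apply Rabs_pos_lt; lra).
  exists (mkposreal _ hd). intros y hy _ ->.
  change (Rabs (c - x) < Rabs (x - c)) in hy. rewrite Rabs_minus_sym in hy. lra.
Qed.

Lemma r_gt_sum (k : nat) (alpha beta : R) : alpha + beta < r_ k alpha beta.
Proof. unfold r_. pose proof (pos_INR k). lra. Qed.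

Lemma q_bounds (k : nat) (alpha beta : R) :
  0 <= beta -> beta < alpha -> 0 < q_ k alpha beta < 1.
Proof.
intros hb hab. pose proof (r_gt_sum k alpha beta). unfold q_.
split; [apply Rdiv_lt_0_compat | apply Rlt_div_l]; lra.
Qed.

Lemma s_bounds (k : nat) (alpha beta : R) :
  0 < alpha + beta -> 0 < s_ k alpha beta < 1.
Proof.
intros hab. pose proof (r_gt_sum k alpha beta). unfold s_.
split; [apply Rdiv_lt_0_compat | apply Rlt_div_l]; lra.
Qed.

Section D_closed_form.
Variables (k : nat) (alpha beta : R).
Let q := q_ k alpha beta.
Let s := s_ k alpha beta.
Let r := r_ k alpha beta.

Lemma d_eq0 (x : R) :
  d_ k alpha beta x = 0 -> x = delta_p k alpha beta \/ x = delta_m k alpha beta.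
Proof.
unfold d_, delta_p, delta_m, sq_. fold q s. intros hd.
set (P := (1 - q^2) * (1 - s^2)) in *.
assert (hsq : (x + q*s)^2 = P).
{ replace ((x + q*s)^2) with (P - (1 - q^2 - s^2 - 2*q*s*x - x^2)) by (unfold P; ring).
  rewrite hd. ring. }
assert (hP : sqrt P * sqrt P = P) by (apply sqrt_sqrt; rewrite <- hsq; apply pow2_ge_0).
assert (hprod : (sqrt P - (x + q*s)) * (sqrt P + (x + q*s)) = 0).
{ replace ((sqrt P - (x + q*s)) * (sqrt P + (x + q*s)))
    with (sqrt P * sqrt P - (x + q*s)^2) by ring.
  rewrite hP, hsq. ring. }
apply Rmult_integral in hprod. destruct hprod; [left | right]; lra.
Qed.

Definition dB (x : R) : R :=
  let u := 1 - x^2 in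
  let u' := -2*x in
  let d := d_ k alpha beta x in
  let d' := -2*q*s - 2*x in
  let E := E_ k alpha beta x in
  let E' := 6*q*s*x^2 - 2*(1 - 4*q^2 - 4*s^2 + q^2*s^2)*x + 6*q*s in
  r^2*(d'*u - 2*d*u')/(4*u^3) + (E'*u*d - E*(u'*d + 2*u*d'))/(4*u^2*d^3).

Lemma B_derive (x : R) : 1 - x^2 <> 0 -> d_ k alpha beta x <> 0 ->
  is_derive (B_ k alpha beta) x (dB x).
Proof.
intros hu hd. unfold B_, dB, E_. unfold d_ in *. fold q s r in hd |- *.
(* [hu] and [hd] in the normal form of [auto_derive]'s side conditions *)
assert (hu' : 1 + - (x*(x*1)) <> 0) by (contradict hu; rewrite <- hu; ring).
assert (hd' : 1 - q * (q * 1) - s * (s * 1) + - (2 * q * s * x) + - (x * (x * 1)) <> 0)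
  by (contradict hd; rewrite <- hd; ring).
auto_derive; repeat split;
  try (repeat apply Rmult_integral_contrapositive_currified; auto; lra).
field. auto.
Qed.

Lemma D_formula_eq (x : R) : 1 - x^2 <> 0 -> d_ k alpha beta x <> 0 ->
  D_formula k alpha beta x = Dpoly q s x.
Proof.
intros hu hd. unfold D_formula.
rewrite (is_derive_unique _ _ _ (B_derive x hu hd)).
unfold A_, B_, dB, E_, Dpoly. unfold d_ in *. fold q s r in hd |- *.
field. auto.
Qed.

Lemma D_eq_Dpoly (x : R) : D_ k alpha beta x = Dpoly q s x.
Proof.
unfold D_. rewrite (is_lim_unique _ _ (Dpoly q s x)); [reflexivity|].
apply (is_lim_ext_loc (Dpoly q s)).
- simpl.
  generalize (filter_and _ _ (locally'_neq x 1) (filter_and _ _ (locally'_neq x (-1))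
    (filter_and _ _ (locally'_neq x (delta_p k alpha beta))
                    (locally'_neq x (delta_m k alpha beta))))).
  apply filter_imp. intros y (h1 & h2 & h3 & h4).
  symmetry. apply D_formula_eq.
  + intro hu. assert (h : (1 - y) * (1 + y) = 0) by (rewrite <- hu; ring).
    apply Rmult_integral in h. destruct h; [apply h1 | apply h2]; lra.
  + intro hd. destruct (d_eq0 y hd); auto.
- apply is_lim_continuity, Dpoly_continuous.
Qed.

End D_closed_form.

Lemma IVT_open (f : R -> R) (a b : R) : continuity f -> a < b ->
  0 < f a -> f b < 0 -> exists z, a < z < b /\ f z = 0.
Proof.
intros hf hab ha hb.
destruct (IVT (fun y => - f y) a b) as [z [hz hfz]];
  [apply continuity_opp; exact hf | lra | lra | lra |].
assert (z <> a) by (intro e; subst z; lra).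
assert (z <> b) by (intro e; subst z; lra).
exists z. lra.
Qed.

Theorem lemma5 (k : nat) (alpha beta x0 : R)
  (hbeta : 0 < beta) (hab : beta < alpha)
  (hx0 : delta_m k alpha beta <= x0 <= delta_p k alpha beta)
  (hD : D_ k alpha beta x0 = 0)
  (huniq : forall y, delta_m k alpha beta <= y <= delta_p k alpha beta ->
             D_ k alpha beta y = 0 -> y = x0) :
  (- (q_ k alpha beta * s_ k alpha beta) - 2 / 3 * sq_ k alpha beta < x0 /\
   x0 < - (q_ k alpha beta * s_ k alpha beta)) /\
  (forall y,
     - (q_ k alpha beta * s_ k alpha beta) - 2 / 3 * sq_ k alpha beta < y <
       - (q_ k alpha beta * s_ k alpha beta) ->
     delta_m k alpha beta < y < delta_p k alpha beta).
Proof.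
pose proof (q_bounds k alpha beta (Rlt_le _ _ hbeta) hab) as hq.
pose proof (s_bounds k alpha beta ltac:(lra)) as hs.
unfold delta_m, delta_p, sq_ in *.
set (q := q_ k alpha beta) in *. set (s := s_ k alpha beta) in *.
assert (hP : 0 < (1 - q^2) * (1 - s^2)) by (apply Rmult_lt_0_compat; nra).
set (S := sqrt ((1 - q^2) * (1 - s^2))) in *.
assert (hS : 0 < S) by (apply sqrt_lt_R0; exact hP).
assert (hSS : S * S = (1 - q^2) * (1 - s^2)) by (apply sqrt_sqrt; lra).
split; [| intros y hy; lra].
destruct (IVT_open (Dpoly q s) (-(q*s) - 2/3*S) (-(q*s))) as [z [hz hDz]].
- apply Dpoly_continuous.
- lra.
- apply Dpoly_left_pos; assumption.
- apply Dpoly_center_neg; assumption.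
- assert (z = x0) as <-; [|exact hz].
  apply huniq; [lra|]. rewrite D_eq_Dpoly. exact hDz.
Qed.
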